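(* Let $\mathcal G$ be the graph defined below, and suppose $(<,\{S,Q\})$ is a mixed $1$-stack $1$-queue layout of $\mathcal G$ in which $v_1<s<t<v_2$ for some edge $(v_1,v_2)\in Q$ and some pair of twins $s,t$. Then: (a) there are three connectors $x_1,x_2,x_3\in C_{s,t}$ that either all satisfy $x_j>v_2$ or all satisfy $x_j<v_1$; (b) for any such three connectors $x_1,x_2,x_3$, there is some $i\in\{1,2,3\}$ such that one of the edges $(s,x_i),(t,x_i)$ lies in $S$ and the other lies in $Q$.
   Context: Graph $\mathcal G$: take two vertices $A,B$ and $19$ copies of a gadget $H$, identified at $A$ and $B$. Each copy of $H$ consists of two further vertices $s,t$ (called twins) joined by the twin edge $(s,t)$, the edges $(A,s),(A,t),(B,s),(B,t)$, and seven further vertices $x_1,\dots,x_7$ (called connectors), each of degree $2$ and adjacent to exactly $s$ and $t$; the set of these seven connectors is denoted $C_{s,t}$. ($A$ and $B$ are not adjacent; $\mathcal G$ has $173$ vertices and $361$ edges.) For a vertex ordering $<$ and an edge $e$, let $L(e)<R(e)$ be its endpoints; edges $e,f$ cross if $L(e)<L(f)<R(e)<R(f)$ and nest if $L(e)<L(f)<R(f)<R(e)$. A stack is an edge set with no two crossing edges, a queue an edge set with no two nested edges. A mixed $1$-stack $1$-queue layout is a vertex ordering $<$ together with a partition of the edge set into a stack $S$ and a queue $Q$. *)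

From mathcomp Require Import all_boot.
Set Implicit Arguments. Unset Strict Implicit. Unset Printing Implicit Defensive.

(* Vertices of G: A = inl false, B = inl true;
   copy i of H: twins inr (i, inl b) (b = false: s, b = true: t),
   connectors inr (i, inr j), j : 'I_7. *)
Definition V : finType := (bool + ('I_19 * (bool + 'I_7)))%type.

Definition vA : V := inl false.
Definition vB : V := inl true.
Definition twin (i : 'I_19) (b : bool) : V := inr (i, inl b).
Definition conn (i : 'I_19) (j : 'I_7) : V := inr (i, inr j).

Definition adj0 (u v : V) : bool :=
  match u, v with
  | inl _, inr (_, inl _) => true
  | inr (i, inl b), inr (i', inl b') => (i == i') && (b != b')
  | inr (i, inl _), inr (i', inr _) => i == i'
  | _, _ => false
  end.
Definition adj (u v : V) : bool := adj0 u v || adj0 v u.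

(* A partition of the edges into a stack S and a
   queue Q is given by a colouring col : V -> V -> bool, symmetric on edges,
   with col u v = true meaning edge uv in S and false meaning uv in Q. *)
Definition crossing (pos : V -> nat) (a b c d : V) : Prop :=
  pos a < pos c < pos b /\ pos b < pos d.
Definition nesting (pos : V -> nat) (a b c d : V) : Prop :=
  pos a < pos c < pos d /\ pos d < pos b.

Definition mixed_layout (pos : V -> nat) (col : V -> V -> bool) : Prop :=
  injective pos /\
  (forall u v, adj u v -> col u v = col v u) /\
  (forall a b c d, adj a b -> adj c d -> pos a < pos b -> pos c < pos d ->
     col a b -> col c d -> ~ crossing pos a b c d) /\
  (forall a b c d, adj a b -> adj c d -> pos a < pos b -> pos c < pos d ->
     ~~ col a b -> ~~ col c d -> ~ nesting pos a b c d).

From mathcomp Require Import all_boot zify.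

(* A connector strictly between v1 and v2 has both of its edges to the twins in
   the stack, since a queue edge there would be nested in the queue edge v1 v2.
   Two such connectors in the same one of the three gaps cut out by s < t would
   produce crossing stack edges, so at most three connectors lie between v1 and
   v2.  If neither side of [v1, v2] receives three connectors, each side gets
   two and every gap is occupied; the occupants of the outer gaps then force
   (t, x) and (s, y) into the queue for the two connectors x < y beyond v2, and
   these nest.
   For (b), a connector whose two edges have the same colour acts as one edge
   of that colour; two such connectors of equal colour on the same side of both
   twins give crossing stack edges or nested queue edges, and two of any three
   connectors share a colour. *)

Set Implicit Arguments.
Unset Strict Implicit.
Unset Printing Implicit Defensive.

Lemma adjC u v : adj u v = adj v u.
Proof. exact: orbC. Qed.

Lemma adj_irrefl : irreflexive adj.
Proof. by case=> [c|[k [c|m]]]; rewrite /adj /= ?eqxx ?orbF. Qed.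

Lemma adj_twin_conn i c j : adj (twin i c) (conn i j).
Proof. by rewrite /adj /= eqxx. Qed.

Lemma adj_conn_twin i c j : adj (conn i j) (twin i c).
Proof. by rewrite adjC adj_twin_conn. Qed.

#[local] Hint Resolve adj_twin_conn adj_conn_twin : core.

Lemma adj_connE u i j : adj u (conn i j) -> exists c, u = twin i c.
Proof.
by case: u => [c|[k [c|m]]]; rewrite /adj /= ?orbF // => /eqP->; exists c.
Qed.

Lemma card_gt2_triple (T : finType) (A : {set T}) : 2 < #|A| ->
  exists x y z : T, [/\ x != y, x != z & y != z] /\
                    (forall w, w \in [:: x; y; z] -> w \in A).
Proof.
case/card_gt2P => [x [y [z [[Ax Ay Az] [nxy nyz nzx]]]]].
exists x, y, z; split; first by rewrite nxy nyz eq_sym nzx.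
by move=> w; rewrite !inE => /or3P[] /eqP->.
Qed.

Section Layout.

Variables (pos : V -> nat) (col : V -> V -> bool).
Hypothesis layout : mixed_layout pos col.

Lemma layout_pos_inj : injective pos.
Proof. by case: layout. Qed.

Lemma layout_colC u v : adj u v -> col u v = col v u.
Proof. by case: layout => _ [colC _]; apply: colC. Qed.

Lemma stack_no_crossing a b c d : adj a b -> adj c d -> col a b -> col c d ->
  pos a < pos c -> pos c < pos b -> pos b < pos d -> False.
Proof.
case: layout => _ [_ [noX _]] ab cd Sab Scd ac cb bd.
by apply: (noX a b c d) => //; rewrite /crossing; lia.
Qed.

Lemma queue_no_nesting a b c d : adj a b -> adj c d -> ~~ col a b -> ~~ col c d ->
  pos a < pos c -> pos c < pos d -> pos d < pos b -> False.
Proof.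
case: layout => _ [_ [_ noN]] ab cd Qab Qcd ac lt_cd db.
by apply: (noN a b c d) => //; rewrite /nesting; lia.
Qed.

Lemma stack_under_queue_edge v1 v2 u w : adj v1 v2 -> ~~ col v1 v2 -> adj u w ->
  pos v1 < pos u < pos v2 -> pos v1 < pos w < pos v2 -> col u w.
Proof.
move=> e12 Q12 euw /andP[v1u uv2] /andP[v1w wv2].
have nuw : pos u != pos w.
  by apply/eqP => /layout_pos_inj uw; move: euw; rewrite uw adj_irrefl.
apply/negPn/negP => Quw; move: nuw; rewrite neq_ltn => /orP[uw|wu].
- exact: (queue_no_nesting e12 euw Q12 Quw v1u uw wv2).
- have ewu : adj w u by rewrite adjC.
  by apply: (queue_no_nesting e12 ewu Q12 _ v1w wu uv2); rewrite -layout_colC.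
Qed.

Section Twins.

Variables (i : 'I_19) (b : bool).
Local Notation s := (twin i b).
Local Notation t := (twin i (~~ b)).
Local Notation x := (conn i).
Hypothesis s_before_t : pos s < pos t.

Lemma pos_conn_neq_twin j c : pos (x j) != pos (twin i c).
Proof. by apply/eqP => /layout_pos_inj. Qed.

Lemma pos_conn_inj : injective (fun j => pos (x j)).
Proof. by move=> j k /layout_pos_inj []. Qed.

Lemma colC_conn c j : col (x j) (twin i c) = col (twin i c) (x j).
Proof. exact: layout_colC. Qed.

Lemma stack_conns_same_side j k : pos (x j) < pos (x k) ->
  (pos (x k) < pos s) || (pos t < pos (x j)) ->
  col s (x j) -> col t (x k) -> False.
Proof.
move=> jk /orP[ks|tj] Sj Sk.
- have Sj' : col (x j) s by rewrite colC_conn.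
  have Sk' : col (x k) t by rewrite colC_conn.
  exact: (stack_no_crossing _ _ Sj' Sk' jk ks s_before_t).
- exact: (stack_no_crossing _ _ Sj Sk s_before_t tj jk).
Qed.

Lemma stack_conns_between_twins j k :
  pos s < pos (x j) -> pos (x j) < pos (x k) -> pos (x k) < pos t ->
  col s (x k) -> col t (x j) -> False.
Proof.
move=> sj jk kt Sk Sj.
have Sj' : col (x j) t by rewrite colC_conn.
exact: (stack_no_crossing _ _ Sk Sj' sj jk kt).
Qed.

Lemma stack_conns_around_twins j k : pos (x j) < pos s -> pos t < pos (x k) ->
  col t (x j) -> col s (x k) -> False.
Proof.
move=> js tk Sj Sk.
have Sj' : col (x j) t by rewrite colC_conn.
exact: (stack_no_crossing _ _ Sj' Sk js s_before_t tk).
Qed.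

Lemma queue_conns_same_side j k : pos (x j) < pos (x k) ->
  (pos (x k) < pos s) || (pos t < pos (x j)) ->
  ~~ col s (x k) -> ~~ col t (x j) -> False.
Proof.
move=> jk /orP[ks|tj] Qk Qj.
- have Qj' : ~~ col (x j) t by rewrite colC_conn.
  have Qk' : ~~ col (x k) s by rewrite colC_conn.
  exact: (queue_no_nesting _ _ Qj' Qk' jk ks s_before_t).
- exact: (queue_no_nesting _ _ Qk Qj s_before_t tj jk).
Qed.

Lemma monochromatic_conns_same_side_differ j k : j != k ->
  [&& pos t < pos (x j) & pos t < pos (x k)] ||
  [&& pos (x j) < pos s & pos (x k) < pos s] ->
  col s (x j) = col t (x j) -> col s (x k) = col t (x k) ->
  col s (x j) != col s (x k).
Proof.
wlog jk : j k / pos (x j) < pos (x k) => [hwlog|] njk side monoj monok.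
  have : pos (x j) != pos (x k) by rewrite (inj_eq pos_conn_inj).
  rewrite neq_ltn => /orP[jk|kj]; first exact: hwlog.
  rewrite eq_sym; apply: hwlog => //; [by rewrite eq_sym | lia].
have {}side : (pos (x k) < pos s) || (pos t < pos (x j)) by lia.
apply/negP => /eqP same; case Sj: (col s (x j)) in same monoj.
- by apply: (stack_conns_same_side jk side Sj); rewrite -monok -same.
- by apply: (queue_conns_same_side jk side); rewrite -?monoj -?same.
Qed.

Lemma mixed_conn_among_three j1 j2 j3 : [/\ j1 != j2, j1 != j3 & j2 != j3] ->
  (forall j, j \in [:: j1; j2; j3] -> pos t < pos (x j)) \/
  (forall j, j \in [:: j1; j2; j3] -> pos (x j) < pos s) ->
  exists2 j, j \in [:: j1; j2; j3] & col s (x j) != col t (x j).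
Proof.
move=> [n12 n13 n23] side.
have [/allP mono | /allPn[j ? ?]] :=
  boolP (all (fun j => col s (x j) == col t (x j)) [:: j1; j2; j3]).
  2: by exists j.
have differ j k : j \in [:: j1; j2; j3] -> k \in [:: j1; j2; j3] -> j != k ->
    col s (x j) != col s (x k).
  move=> jin kin njk; apply: monochromatic_conns_same_side_differ njk _ _ _.
  - by case: side => side; rewrite (side j) ?(side k) ?orbT.
  - exact/eqP/mono.
  - exact/eqP/mono.
exfalso; move: (differ j1 j2) (differ j1 j3) (differ j2 j3).
rewrite !inE !eqxx /= ?orbT.
move=> /(_ isT isT n12) + /(_ isT isT n13) + /(_ isT isT n23).
by case: (col s (x j1)) (col s (x j2)) (col s (x j3)) => [] [] [].
Qed.

Lemma no_two_conns_beyond_filled_gaps zL zR j k :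
  pos (x zL) < pos s -> col t (x zL) -> pos t < pos (x zR) -> col s (x zR) ->
  pos (x zR) < pos (x j) -> pos (x j) < pos (x k) -> False.
Proof.
move=> zLs SzL tzR SzR zRj jk.
have Qk : ~~ col s (x k).
  by apply/negP => Sk; apply: (stack_conns_around_twins zLs _ SzL Sk); lia.
have Qj : ~~ col t (x j).
  apply/negP => Sj; apply: (stack_conns_same_side zRj _ SzR Sj).
  by rewrite tzR orbT.
by apply: (queue_conns_same_side jk _ Qk Qj); apply/orP; right; lia.
Qed.

Definition twins_before j : nat := (pos s < pos (x j)) + (pos t < pos (x j)).

Lemma twins_before_sub_iota (js : seq 'I_7) :
  {subset [seq twins_before j | j <- js] <= iota 0 3}.
Proof. by move=> _ /mapP[j _ ->]; rewrite mem_iota /twins_before; lia. Qed.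

Lemma twins_before_eq0 j : twins_before j = 0 -> pos (x j) < pos s.
Proof. by have := pos_conn_neq_twin j b; rewrite /twins_before; lia. Qed.

Lemma twins_before_eq2 j : twins_before j = 2 -> pos t < pos (x j).
Proof. by rewrite /twins_before; lia. Qed.

Lemma double_stack_twins_before_inj :
  {in [pred j | col s (x j) && col t (x j)] &, injective twins_before}.
Proof.
move=> j k /andP[Ssj Stj] /andP[Ssk Stk] same.
have [//|njk] := eqVneq j k; exfalso.
wlog jk : j k Ssj Stj Ssk Stk same njk / pos (x j) < pos (x k) => [hwlog|].
  have : pos (x j) != pos (x k) by rewrite (inj_eq pos_conn_inj).
  rewrite neq_ltn => /orP[jk|kj]; first exact: (hwlog j k).
  by apply: (hwlog k j) => //; rewrite eq_sym.
have [side|between] :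
    (pos (x k) < pos s) || (pos t < pos (x j)) \/
    (pos s < pos (x j)) && (pos (x k) < pos t).
  have := pos_conn_neq_twin j b; have := pos_conn_neq_twin j (~~ b).
  have := pos_conn_neq_twin k b; have := pos_conn_neq_twin k (~~ b).
  by move: same; rewrite /twins_before; lia.
- exact: (stack_conns_same_side jk side Ssj Stk).
- case/andP: between => sj kt.
  exact: (stack_conns_between_twins sj jk kt Ssk Stj).
Qed.

Section QueueEdge.

Variables v1 v2 : V.
Hypotheses (adj_v12 : adj v1 v2) (queue_v12 : ~~ col v1 v2).
Hypotheses (v1_before_s : pos v1 < pos s) (t_before_v2 : pos t < pos v2).

Local Notation inner := [set j : 'I_7 | pos v1 < pos (x j) < pos v2].

Lemma pos_conn_neq_ends j : (pos (x j) != pos v1) && (pos (x j) != pos v2).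
Proof.
have twin_inside c : pos v1 < pos (twin i c) < pos v2.
  have [->|->] : c = b \/ c = ~~ b by case: b c => [] []; auto.
  1, 2: lia.
apply/andP; split; apply/eqP => /layout_pos_inj xj.
- have [c v2E] : exists c, v2 = twin i c.
    by apply: (adj_connE (j := j)); rewrite adjC xj.
  by have := twin_inside c; rewrite -v2E; lia.
- have [c v1E] : exists c, v1 = twin i c.
    by apply: (adj_connE (j := j)); rewrite xj.
  by have := twin_inside c; rewrite -v1E; lia.
Qed.

Lemma inner_conn_double_stack j : j \in inner -> col s (x j) && col t (x j).
Proof.
rewrite inE => xj_inner.
by apply/andP; split;
  apply: (stack_under_queue_edge adj_v12 queue_v12) => //; lia.
Qed.

Lemma uniq_twins_before_inner : uniq [seq twins_before j | j <- enum inner].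
Proof.
rewrite map_inj_in_uniq ?enum_uniq // => j k; rewrite !mem_enum => jin kin.
by apply: double_stack_twins_before_inj; rewrite inE inner_conn_double_stack.
Qed.

Lemma card_inner_conns : #|inner| <= 3.
Proof.
rewrite cardE -(size_map twins_before) -[X in _ <= X](size_iota 0 3).
exact: uniq_leq_size uniq_twins_before_inner (twins_before_sub_iota (js := _)).
Qed.

Lemma inner_conns_fill_outer_gaps : 3 <= #|inner| ->
  exists zL zR,
    [/\ zL \in inner, zR \in inner, pos (x zL) < pos s & pos t < pos (x zR)].
Proof.
rewrite cardE -(size_map twins_before) -{1}(size_iota 0 3) => size_ge.
have [_ fill] := uniq_min_size uniq_twins_before_inner
  (twins_before_sub_iota (js := _)) size_ge.
have /mapP[zL zL_inner /esym/twins_before_eq0 zLs] :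
  0 \in map twins_before (enum inner) by rewrite fill.
have /mapP[zR zR_inner /esym/twins_before_eq2 tzR] :
  2 \in map twins_before (enum inner) by rewrite fill.
by exists zL, zR; move: zL_inner zR_inner; rewrite !mem_enum.
Qed.

Lemma three_conns_outside_queue_edge : exists j1 j2 j3 : 'I_7,
  [/\ j1 != j2, j1 != j3 & j2 != j3] /\
  ((forall j, j \in [:: j1; j2; j3] -> pos v2 < pos (x j)) \/
   (forall j, j \in [:: j1; j2; j3] -> pos (x j) < pos v1)).
Proof.
set R := [set j : 'I_7 | pos v2 < pos (x j)].
set L := [set j : 'I_7 | pos (x j) < pos v1].
have cover : 7 <= #|R| + #|L| + #|inner|.
  have : [set: 'I_7] \subset R :|: L :|: inner.
    by apply/subsetP => j _; rewrite !inE; have := pos_conn_neq_ends j; lia.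
  move/subset_leq_card; rewrite cardsT card_ord => /leq_trans; apply.
  by apply: leq_trans (leq_card_setU _ _) _; rewrite leq_add2r leq_card_setU.
have [/card_gt2_triple[j1 [j2 [j3 [nj inR]]]] | R_le2] := ltnP 2 #|R|.
  by exists j1, j2, j3; split=> //; left=> j /inR; rewrite inE.
have [/card_gt2_triple[j1 [j2 [j3 [nj inL]]]] | L_le2] := ltnP 2 #|L|.
  by exists j1, j2, j3; split=> //; right=> j /inL; rewrite inE.
exfalso; have inner_full : 3 <= #|inner| by lia.
have [zL [zR [zL_inner zR_inner zLs tzR]]] :=
  inner_conns_fill_outer_gaps inner_full.
have /card_gt1P[j [k [jR kR njk]]] : 1 < #|R| by have := card_inner_conns; lia.
have /andP[_ SzL] := inner_conn_double_stack zL_inner.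
have /andP[SzR _] := inner_conn_double_stack zR_inner.
have beyond_zR y : y \in R -> pos (x zR) < pos (x y).
  by move: zR_inner; rewrite !inE => /andP[_ zRv2] v2y; lia.
have : pos (x j) != pos (x k) by rewrite (inj_eq pos_conn_inj).
rewrite neq_ltn => /orP[jk|kj].
- exact: (no_two_conns_beyond_filled_gaps zLs SzL tzR SzR (beyond_zR j jR) jk).
- exact: (no_two_conns_beyond_filled_gaps zLs SzL tzR SzR (beyond_zR k kR) kj).
Qed.

End QueueEdge.

End Twins.
End Layout.

Theorem lemma1 (pos : V -> nat) (col : V -> V -> bool) :
  mixed_layout pos col ->
  forall (v1 v2 : V) (i : 'I_19) (b : bool),
    adj v1 v2 -> ~~ col v1 v2 ->
    pos v1 < pos (twin i b) -> pos (twin i b) < pos (twin i (~~ b)) ->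
    pos (twin i (~~ b)) < pos v2 ->
    let s := twin i b in let t := twin i (~~ b) in
    (exists j1 j2 j3 : 'I_7, [/\ j1 != j2, j1 != j3 & j2 != j3] /\
       ((forall j, j \in [:: j1; j2; j3] -> pos v2 < pos (conn i j)) \/
        (forall j, j \in [:: j1; j2; j3] -> pos (conn i j) < pos v1)))
    /\
    (forall j1 j2 j3 : 'I_7, [/\ j1 != j2, j1 != j3 & j2 != j3] ->
       ((forall j, j \in [:: j1; j2; j3] -> pos v2 < pos (conn i j)) \/
        (forall j, j \in [:: j1; j2; j3] -> pos (conn i j) < pos v1)) ->
       exists2 j, j \in [:: j1; j2; j3] & col s (conn i j) != col t (conn i j)).
Proof.
move=> layout v1 v2 i b adj_v12 queue_v12 v1_before_s s_before_t t_before_v2 s t.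
split.
  exact: (three_conns_outside_queue_edge layout s_before_t adj_v12 queue_v12
           v1_before_s t_before_v2).
move=> j1 j2 j3 distinct side.
apply: (mixed_conn_among_three layout s_before_t distinct).
by case: side => beyond; [left | right] => j /beyond; lia.
Qed.
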